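(* Let $n\ge 2$ and let $G=(V,E)$ be a $k$-edge-connected graph on $n$ vertices with $k\ge 7\log_2 n$. Then there is a set $S\subseteq V$ with $|S|\ge 2$ such that the induced subgraph $G[S]$ is $k/20$-edge-connected, $1/4$-dense in $G$, and satisfies $\phi(G[S])\ge 1/k$.
   Context: Graphs are finite, undirected, unweighted, loopless, possibly with parallel edges; $k$-edge-connected means every cut $(S,\overline S)$, $\emptyset\ne S\subsetneq V$, has at least $k$ edges. For a graph $H$ and $S\subseteq V(H)$, $\partial_H(S)$ is the number of edges of $H$ leaving $S$, $d_H(S)$ is the sum of $H$-degrees of vertices in $S$, and $\phi(H)=\min_{\emptyset\ne S\subsetneq V(H)}\partial_H(S)/\min\{d_H(S),d_H(V(H)\setminus S)\}$. An induced subgraph $H$ of $G$ is $\lambda$-dense if $d_H(v)\ge\lambda\, d_G(v)$ for every vertex $v$ of $H$. *)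

From HB Require Import structures.
From mathcomp Require Import all_boot all_order all_algebra.
From Stdlib Require Import Reals.
Set Implicit Arguments. Unset Strict Implicit. Unset Printing Implicit Defensive.
Import Order.TTheory GRing.Theory Num.Theory.
Local Open Scope ring_scope.

(* A finite undirected loopless multigraph on vertex type T:
   mult x y = number of parallel edges between x and y. *)
Record mgraph (T : finType) := MGraph {
  mult : T -> T -> nat;
  mult_sym : forall x y, mult x y = mult y x;
  mult_irr : forall x, mult x x = 0%N
}.

Section Graphs.
Variable T : finType.
Implicit Types (G : mgraph T) (A : {set T}).

Definition deg G (v : T) : nat := (\sum_(y : T) mult G v y)%N.
Definition degS G A : nat := (\sum_(v in A) deg G v)%N.
Definition cut G A : nat := (\sum_(x in A) \sum_(y in ~: A) mult G x y)%N.

Definition edge_connected G (c : rat) : Prop :=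
  forall A, A != set0 -> A != setT -> c <= (cut G A)%:R.

Definition cond_ratio G A : rat :=
  (cut G A)%:R / (minn (degS G A) (degS G (~: A)))%:R.

(* conductance phi(G) = min over nonempty proper A of cond_ratio.
   (The neutral element 1 only matters when there is no such A, i.e. |V| <= 1;
   note each ratio is <= 1 anyway.) *)
Definition phi G : rat :=
  \big[Num.min/1]_(A : {set T} | (A != set0) && (A != setT)) cond_ratio G A.
End Graphs.

Section Induced.
Variables (T : finType) (G : mgraph T) (S : {set T}).
Definition ind_mult (x y : {x : T | x \in S}) : nat := mult G (val x) (val y).
Lemma ind_mult_sym x y : ind_mult x y = ind_mult y x.
Proof. by rewrite /ind_mult mult_sym. Qed.
Lemma ind_mult_irr x : ind_mult x x = 0%N.
Proof. by rewrite /ind_mult mult_irr. Qed.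
Definition induced : mgraph {x : T | x \in S} := MGraph ind_mult_sym ind_mult_irr.
End Induced.

Definition dense (T : finType) (G : mgraph T) (S : {set T}) (lam : rat) : Prop :=
  forall v : {x : T | x \in S}, lam * (deg G (val v))%:R <= (deg (induced G S) v)%:R.

Definition log_bound (k n : nat) : Prop :=
  (7 * (ln (INR n) / ln 2) <= INR k)%R.

(* Potential argument.  Write L = floor(log2 |V|) and, for a vertex set S,
   t(S) = L - floor(log2 |S|).  Call S good if
     10 k d(S, V\S) <= 20 t(S) vol(S) + k^2.
   V is good (it has no boundary) while no singleton is (its boundary is its
   degree, at least k >= 7 L >= 7 t).  Let S be a smallest nonempty good set.
   For any split S = A + B with |A| <= |S|/2, neither A nor B is good, and
   t(A) >= t(S) + 1; adding the two failures to the goodness of S leaves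
     k^2 + 20 vol(A) < 20 k e(A, B),
   which yields both e(A, B) >= k/20 and e(A, B) >= vol(A)/k.  Splitting off a
   single vertex v in the same way gives d_G(v) <= 4 d_S(v). *)

From Stdlib Require Import Reals Lra.
From HB Require Import structures.
From mathcomp Require Import all_boot all_order all_algebra zify.
Import Order.TTheory GRing.Theory Num.Theory.
Set Implicit Arguments. Unset Strict Implicit. Unset Printing Implicit Defensive.

Section LogBound.
Local Open Scope R_scope.

Lemma INR_expn2 t : INR (expn 2 t) = pow 2 t.
Proof. by elim: t => [|t IH] //=; rewrite expnS mult_INR IH /=; lra. Qed.

Lemma log_bound_trunc_log k n : (0 < n)%N -> log_bound k n -> (7 * trunc_log 2 n <= k)%N.
Proof.
move=> n_gt0 hk; set t := trunc_log 2 n.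
have ln2_gt0 : 0 < ln 2 by have := ln_lt_2; lra.
have pow_le : pow 2 t <= INR n.
  by rewrite -INR_expn2; apply/le_INR/ssrnat.leP/trunc_logP.
have t_ln2_le : INR t * ln 2 <= ln (INR n).
  rewrite -ln_pow; last lra.
  have pow_gt0 : 0 < pow 2 t by apply: pow_lt; lra.
  case: (Rle_lt_or_eq_dec _ _ pow_le) => [lt | ->]; last exact: Rle_refl.
  exact/Rlt_le/ln_increasing.
have : INR (7 * t) <= INR k.
  apply: Rle_trans hk; rewrite mult_INR.
  have -> : INR 7 * INR t = 7 * (INR t * ln 2 / ln 2) by simpl; field; lra.
  apply: Rmult_le_compat_l; first lra.
  by apply: Rmult_le_compat_r t_ln2_le; apply/Rlt_le/Rinv_0_lt_compat.
by move/INR_le/ssrnat.leP.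
Qed.

End LogBound.

Section EdgeCounts.
Variables (T : finType) (G : mgraph T).
Implicit Types (S A X Y : {set T}).

Definition edges X Y : nat := \sum_(x in X) \sum_(y in Y) mult G x y.

Lemma edgesC X Y : edges X Y = edges Y X.
Proof.
rewrite /edges exchange_big; apply: eq_bigr => y _; apply: eq_bigr => x _.
exact: mult_sym.
Qed.

Lemma edges_partl S A Y : A \subset S -> edges S Y = edges A Y + edges (S :\: A) Y.
Proof. by move=> sAS; rewrite /edges (big_setID A) (setIidPr sAS). Qed.

Lemma edges_partr X S A : A \subset S -> edges X S = edges X A + edges X (S :\: A).
Proof. by move=> sAS; rewrite edgesC (edges_partl _ sAS) !(edgesC X). Qed.

Lemma edges_set1 v : edges [set v] [set v] = 0.
Proof. by rewrite /edges !big_set1 mult_irr. Qed.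

Lemma cut_edges A : cut G A = edges A (~: A).
Proof. by []. Qed.

Lemma degS_edges A : degS G A = edges A setT.
Proof.
by apply: eq_bigr => v _; apply: eq_bigl => y; rewrite inE.
Qed.

Lemma edges_le_degS A Y : edges A Y <= degS G A.
Proof. by rewrite degS_edges (edges_partr _ (subsetT Y)) leq_addr. Qed.

Lemma degS_part S A : A \subset S -> degS G S = degS G A + degS G (S :\: A).
Proof. by move=> sAS; rewrite !degS_edges (edges_partl _ sAS). Qed.

Lemma cut_part S A : A \subset S -> cut G A = edges A (S :\: A) + edges A (~: S).
Proof.
move=> sAS; rewrite cut_edges (edges_partr _ (_ : ~: S \subset ~: A)); last by rewrite setCS.
rewrite addnC; congr (edges _ _ + _); by apply/setP => y; rewrite !inE negbK andbC.
Qed.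

Lemma setDD_sub S A : A \subset S -> S :\: (S :\: A) = A.
Proof. by move=> sAS; rewrite setDDr setDv set0U (setIidPr sAS). Qed.

Lemma cut_partC S A : A \subset S ->
  cut G (S :\: A) = edges A (S :\: A) + edges (S :\: A) (~: S).
Proof. by move=> sAS; rewrite (cut_part (subsetDl S A)) setDD_sub // edgesC. Qed.

Lemma cut_partS S A : A \subset S -> cut G S = edges A (~: S) + edges (S :\: A) (~: S).
Proof. exact: edges_partl. Qed.

Lemma cut_set1 v : cut G [set v] = deg G v.
Proof.
rewrite cut_edges /edges big_set1 /deg [RHS](bigD1 v) //= mult_irr add0r.
by apply: eq_bigl => y; rewrite !inE.
Qed.

Lemma degS_set1 v : degS G [set v] = deg G v.
Proof. exact: big_set1. Qed.

End EdgeCounts.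

Section InducedCounts.
Variables (T : finType) (G : mgraph T) (S : {set T}).
Local Notation sT := {x : T | x \in S}.
Local Notation H := (induced G S).
Implicit Types (A B : {set sT}).

Lemma sum_imset_val A (F : T -> nat) : \sum_(u in A) F (val u) = \sum_(x in val @: A) F x.
Proof. by rewrite big_imset //; move=> u w _ _; apply: val_inj. Qed.

Lemma imset_valC A : val @: (~: A) = S :\: val @: A.
Proof.
apply/setP => x; rewrite !inE; apply/imsetP/andP.
  case=> u; rewrite inE => uA ->; split; last exact: valP.
  by apply/imsetP => -[w wA /val_inj eq_uw]; move: uA; rewrite eq_uw wA.
case=> /imsetP notA xS; exists (exist _ x xS) => //; rewrite inE.
by apply/negP => uA; apply: notA; exists (exist _ x xS).
Qed.

Lemma imset_valT : val @: [set: sT] = S.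
Proof. by rewrite -setC0 imset_valC imset0 setD0. Qed.

Lemma imset_val_sub A : val @: A \subset S.
Proof. by apply/subsetP => x /imsetP [u _ ->]; apply: valP. Qed.

Lemma edges_imset_val A B :
  edges G (val @: A) (val @: B) = \sum_(u in A) \sum_(w in B) mult H u w.
Proof. by rewrite /edges -sum_imset_val; apply: eq_bigr => u _; rewrite -sum_imset_val. Qed.

Lemma cut_induced A : cut H A = edges G (val @: A) (S :\: val @: A).
Proof. by rewrite -imset_valC (edges_imset_val A (~: A)). Qed.

Lemma degS_induced A : degS H A = edges G (val @: A) S.
Proof.
have -> : edges G (val @: A) S = edges G (val @: A) (val @: [set: sT]) by rewrite imset_valT.
rewrite edges_imset_val; apply: eq_bigr => u _.
by apply: eq_bigl => w; rewrite inE.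
Qed.

Lemma deg_induced u : deg H u = edges G [set val u] S.
Proof. by rewrite -degS_set1 degS_induced imset_set1. Qed.

Lemma imset_val_split A : A != set0 -> A != setT ->
  [/\ val @: A \subset S, val @: A != set0 & S :\: val @: A != set0].
Proof.
move=> A_ne0 A_neT; split; [exact: imset_val_sub | by rewrite imset_eq0 |].
rewrite -imset_valC imset_eq0; apply: contra A_neT => /eqP AC_0.
by rewrite -[A]setCK AC_0 setC0.
Qed.

Local Open Scope ring_scope.

Lemma edge_connected_induced (c d : nat) :
  (0 < d)%N ->
  (forall A : {set T}, A \subset S -> A != set0 -> S :\: A != set0 -> c <= d * edges G A (S :\: A))%N ->
  edge_connected H (c%:R / d%:R).
Proof.
move=> d_gt0 split_ge A A_ne0 A_neT; have [sAS A'_ne0 B_ne0] := imset_val_split A_ne0 A_neT.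
by rewrite cut_induced ler_pdivrMr ?ltr0n // -natrM ler_nat mulnC split_ge.
Qed.

Lemma dense_induced (m : nat) :
  (forall v, v \in S -> deg G v <= m * edges G [set v] S)%N -> dense G S m%:R^-1.
Proof.
move=> deg_le u; rewrite deg_induced.
have [-> | m_gt0] := posnP m; first by rewrite invr0 mul0r.
by rewrite ler_pdivrMl ?ltr0n // -natrM ler_nat deg_le ?(valP u).
Qed.

Lemma phi_induced_ge (c : nat) : (0 < c)%N ->
  (forall A : {set T}, A \subset S -> A != set0 -> S :\: A != set0 ->
     0 < edges G A (S :\: A) /\ minn (edges G A S) (edges G (S :\: A) S) <= c * edges G A (S :\: A))%N ->
  c%:R^-1 <= phi H.
Proof.
move=> c_gt0 split_ge; rewrite /phi; apply: (big_ind (fun r => c%:R^-1 <= r)).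
- by rewrite invf_le1 ?ler1n ?ltr0n.
- by move=> r r' le_r le_r'; rewrite le_min le_r le_r'.
move=> A /andP [A_ne0 A_neT]; have [sAS A'_ne0 B_ne0] := imset_val_split A_ne0 A_neT.
rewrite /cond_ratio cut_induced !degS_induced imset_valC.
have [x_gt0 min_le] := split_ge _ sAS A'_ne0 B_ne0.
set B := S :\: val @: A in x_gt0 min_le *; set x := edges G (val @: A) B in x_gt0 min_le *.
have le_x_A : (x <= edges G (val @: A) S)%N by rewrite (edges_partr G _ sAS) leq_addl.
have le_x_B : (x <= edges G B S)%N by rewrite (edges_partr G _ sAS) edgesC leq_addr.
have min_gt0 : (0 < minn (edges G (val @: A) S) (edges G B S))%N.
  by rewrite leq_min (leq_trans x_gt0 le_x_A) (leq_trans x_gt0 le_x_B).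
by rewrite ler_pdivlMr ?ltr0n // mulrC ler_pdivrMr ?ltr0n // -natrM ler_nat mulnC.
Qed.

End InducedCounts.

Section Potential.
Variables (T : finType) (G : mgraph T) (k : nat).
Hypotheses (card_gt1 : 1 < #|T|)
  (cut_ge : forall A : {set T}, A != set0 -> A != setT -> k <= cut G A)
  (k_ge_log : 7 * trunc_log 2 #|T| <= k).
Implicit Types (S A : {set T}).

Definition log_gap s := trunc_log 2 #|T| - trunc_log 2 s.

Definition small_boundary S : bool :=
  10 * k * cut G S <= 20 * log_gap #|S| * degS G S + k * k.

Lemma k_gt0 : 0 < k.
Proof. have : 0 < trunc_log 2 #|T| by rewrite trunc_log_gt0. lia. Qed.

Lemma log_gap_le s : 7 * log_gap s <= k.
Proof. rewrite /log_gap; lia. Qed.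

Lemma log_gap_monotone s s' : s <= s' -> log_gap s' <= log_gap s.
Proof. by move=> le_ss'; rewrite /log_gap; have := leq_trunc_log 2 le_ss'; lia. Qed.

Lemma log_gap_half a s : 0 < a -> 2 * a <= s -> s <= #|T| -> log_gap s < log_gap a.
Proof.
move=> a_gt0 le_2a_s le_s_T; rewrite /log_gap.
have := trunc_log2_double a_gt0; have := leq_trunc_log 2 le_s_T.
have : trunc_log 2 a.*2 <= trunc_log 2 s by apply: leq_trunc_log; rewrite -mul2n.
lia.
Qed.

Lemma deg_ge v : k <= deg G v.
Proof.
rewrite -cut_set1; apply: cut_ge; first by apply/set0Pn; exists v; rewrite set11.
by apply/eqP => set1_T; move: card_gt1; rewrite -cardsT -set1_T cards1.
Qed.

Lemma small_boundary_setT : small_boundary setT.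
Proof. by rewrite /small_boundary cut_edges setCT /edges big1 ?muln0 // => x _; apply: big_set0. Qed.

Lemma small_boundary_set1 v : ~~ small_boundary [set v].
Proof.
rewrite /small_boundary cut_set1 degS_set1 cards1 -ltnNge.
have := log_gap_le 1; have := deg_ge v.
set d := deg G v; set t := log_gap 1 => le_k_d le_t_k.
have : 7 * (t * d) <= k * d by rewrite mulnA leq_mul2r le_t_k orbT.
have : k * k <= k * d by rewrite leq_mul2l le_k_d orbT.
have : 0 < k * d by rewrite muln_gt0 k_gt0 (leq_trans k_gt0 le_k_d).
lia.
Qed.

Lemma exists_minimal_small_boundary : exists S,
  [/\ S != set0, small_boundary S
    & forall S', S' != set0 -> small_boundary S' -> #|S| <= #|S'|].
Proof.
have setT_ne0 : [set: T] != set0 by rewrite -card_gt0 cardsT ltnW.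
have [S /andP [S_ne0 S_small] S_min] :=
  @arg_minnP _ setT (fun S => (S != set0) && small_boundary S) (fun S => #|S|)
    (introT andP (conj setT_ne0 small_boundary_setT)).
by exists S; split=> // S' S'_ne0 S'_small; apply: S_min; rewrite S'_ne0.
Qed.

Section MinimalSet.
Variable S : {set T}.
Hypotheses (S_small : small_boundary S)
  (S_min : forall S', S' != set0 -> small_boundary S' -> #|S| <= #|S'|).

Lemma smaller_not_small S' : S' != set0 -> #|S'| < #|S| -> ~~ small_boundary S'.
Proof. by move=> S'_ne0 lt_S'_S; apply/negP => /(S_min S'_ne0); rewrite leqNgt lt_S'_S. Qed.

Lemma minimal_card_gt1 : S != set0 -> 1 < #|S|.
Proof.
move=> S_ne0; rewrite ltn_neqAle card_gt0 S_ne0 andbT eq_sym.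
apply/negP => /cards1P [v S_v].
by move: S_small; rewrite S_v (negbTE (small_boundary_set1 v)).
Qed.

Lemma split_bound_half A : A \subset S -> A != set0 -> S :\: A != set0 ->
  2 * #|A| <= #|S| -> k * k + 20 * degS G A < 20 * k * edges G A (S :\: A).
Proof.
move=> sAS A_ne0 B_ne0 le_2A_S.
have card_B : #|S :\: A| = #|S| - #|A| by rewrite cardsD (setIidPr sAS).
have A_gt0 : 0 < #|A| by rewrite card_gt0.
have B_gt0 : 0 < #|S :\: A| by rewrite card_gt0.
have le_S_T : #|S| <= #|T| by apply: max_card.
have gap_A := log_gap_half A_gt0 le_2A_S le_S_T.
have gap_B : log_gap #|S| <= log_gap #|S :\: A| by apply: log_gap_monotone; rewrite card_B leq_subr.
have lt_A_S : #|A| < #|S| by lia.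
have lt_B_S : #|S :\: A| < #|S| by lia.
have := smaller_not_small A_ne0 lt_A_S; have := smaller_not_small B_ne0 lt_B_S.
move: S_small; rewrite /small_boundary -!ltnNge.
rewrite (cut_part G sAS) (cut_partC G sAS) (cut_partS G sAS) (degS_part G sAS).
set x := edges G A (S :\: A); set a := edges G A (~: S); set b := edges G (S :\: A) (~: S).
set vA := degS G A; set vB := degS G (S :\: A).
have : log_gap #|S| * vA + vA <= log_gap #|A| * vA.
  by rewrite addnC -mulSn leq_mul2r gap_A orbT.
have : log_gap #|S| * vB <= log_gap #|S :\: A| * vB by rewrite leq_mul2r gap_B orbT.
lia.
Qed.

Lemma split_bound A : A \subset S -> A != set0 -> S :\: A != set0 ->
  k * k + 20 * minn (degS G A) (degS G (S :\: A)) < 20 * k * edges G A (S :\: A).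
Proof.
move=> sAS A_ne0 B_ne0; have le_A_S : #|A| <= #|S| by apply: subset_leq_card.
have card_B : #|S :\: A| = #|S| - #|A| by rewrite cardsD (setIidPr sAS).
have := geq_minl (degS G A) (degS G (S :\: A)); have := geq_minr (degS G A) (degS G (S :\: A)).
case: (leqP (2 * #|A|) #|S|) => [le_2A_S | lt_S_2A].
  by have := split_bound_half sAS A_ne0 B_ne0 le_2A_S; lia.
have le_2B_S : 2 * #|S :\: A| <= #|S| by lia.
have := split_bound_half (subsetDl S A) B_ne0; rewrite setDD_sub // edgesC.
by move/(_ A_ne0 le_2B_S); lia.
Qed.

Lemma split_edges_ge A : A \subset S -> A != set0 -> S :\: A != set0 ->
  k <= 20 * edges G A (S :\: A).
Proof.
move=> sAS A_ne0 B_ne0; rewrite -(leq_pmul2l k_gt0).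
by have := split_bound sAS A_ne0 B_ne0; lia.
Qed.

Lemma split_vol_le A : A \subset S -> A != set0 -> S :\: A != set0 ->
  minn (edges G A S) (edges G (S :\: A) S) <= k * edges G A (S :\: A).
Proof.
move=> sAS A_ne0 B_ne0; have := split_bound sAS A_ne0 B_ne0.
have := edges_le_degS G A S; have := edges_le_degS G (S :\: A) S; lia.
Qed.

Lemma minimal_deg_le v : v \in S -> deg G v <= 4 * edges G [set v] S.
Proof.
move=> S_v; rewrite leqNgt; apply/negP => lt_4x_d.
have sVS : [set v] \subset S by rewrite sub1set.
have card_S' := cardsD1 v S; rewrite S_v add1n in card_S'.
have S_gt1 : 1 < #|S| by apply: minimal_card_gt1; apply/set0Pn; exists v.
have S'_ne0 : S :\: [set v] != set0 by rewrite -card_gt0; lia.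
have lt_S'_S : #|S :\: [set v]| < #|S| by lia.
have := smaller_not_small S'_ne0 lt_S'_S.
move: S_small; rewrite /small_boundary -ltnNge.
rewrite (cut_partC G sVS) (cut_partS G sVS) (degS_part G sVS) degS_set1.
move: lt_4x_d (cut_part G sVS); rewrite (edges_partr G _ sVS) edges_set1 cut_set1.
have gap_S : log_gap #|S| <= log_gap #|S :\: [set v]| by apply: log_gap_monotone; lia.
have := log_gap_le #|S|; have := k_gt0.
set x := edges G [set v] (S :\: [set v]); set b := edges G [set v] (~: S).
set a := edges G (S :\: [set v]) (~: S); set d := deg G v; set vS' := degS G (S :\: [set v]).
set tS := log_gap #|S|; set tS' := log_gap #|S :\: [set v]| => k_gt0 le_tS_k lt_4x_d d_eq.
have : 7 * (tS * d) <= k * d by rewrite mulnA leq_mul2r le_tS_k orbT.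
have : tS * vS' <= tS' * vS' by rewrite leq_mul2r gap_S orbT.
have : k * (4 * x + 1) <= k * d by rewrite leq_mul2l addn1 lt_4x_d orbT.
have : k * d = k * x + k * b by rewrite d_eq mulnDr.
lia.
Qed.

End MinimalSet.

Lemma exists_core_set : exists S,
  [/\ 1 < #|S|,
      forall A, A \subset S -> A != set0 -> S :\: A != set0 -> k <= 20 * edges G A (S :\: A),
      forall v, v \in S -> deg G v <= 4 * edges G [set v] S
    & forall A, A \subset S -> A != set0 -> S :\: A != set0 ->
        minn (edges G A S) (edges G (S :\: A) S) <= k * edges G A (S :\: A)].
Proof.
have [S [S_ne0 S_small S_min]] := exists_minimal_small_boundary.
exists S; split; first exact: minimal_card_gt1.
- exact: split_edges_ge.
- exact: minimal_deg_le.
- exact: split_vol_le.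
Qed.

End Potential.

Local Open Scope ring_scope.

Theorem mainTheorem9 (n : nat) (T : finType) (G : mgraph T) (k : nat) :
  (2 <= n)%N -> #|T| = n ->
  edge_connected G k%:R ->
  log_bound k n ->
  exists S : {set T},
    [/\ (2 <= #|S|)%N,
        edge_connected (induced G S) (k%:R / 20),
        dense G S (1 / 4)
      & 1 / k%:R <= phi (induced G S)].
Proof.
move=> n_ge2 card_T G_conn k_log.
have card_gt1 : (1 < #|T|)%N by rewrite card_T.
have k_ge_log := log_bound_trunc_log (ltnW n_ge2) k_log; rewrite -card_T in k_ge_log.
have cut_ge A : A != set0 -> A != setT -> (k <= cut G A)%N.
  by move=> A_ne0 A_neT; rewrite -(ler_nat rat) G_conn.
have [S [S_gt1 split_ge deg_le vol_le]] := exists_core_set card_gt1 cut_ge k_ge_log.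
have k_pos := k_gt0 card_gt1 k_ge_log.
exists S; split => //.
- exact: edge_connected_induced.
- by rewrite div1r; apply: dense_induced.
- rewrite div1r; apply: phi_induced_ge => // A sAS A_ne0 B_ne0.
  split; last exact: vol_le.
  by have := split_ge A sAS A_ne0 B_ne0; lia.
Qed.
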